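(* Suppose each $f_v$ is $K_v$-Lipschitz and let $\bar K=\frac1{rn}\sum_vK_v$. If $\mathcal P$ is sampled uniformly from all partitions of $V(G)$ into $n$ (ordered) sets of size $r$ and $T=T_{\vec B,\mathcal P}$ with $\vec B$ independent of $\mathcal P$, then $$\mathbb E_{\mathcal P}\big|\mathbb E_{\vec B}(\xi\mid\mathcal P)\big|\le\frac{\bar K}{rn-1}.$$
   Context: Let $n,p,q$ be positive integers, $r=p+q$, $G$ a finite simple graph with $|V(G)|=rn$ and no isolated vertices; $\mathcal N(v)$, $d(v)$ neighbor set and degree. For each $v$, $f_v:2^{\mathcal N(v)}\to\mathbb R$ with $f_v(\emptyset)=0$. $\sigma_T(v)=q$ if $v\in T$, $-p$ otherwise; for $|T|=pn$, $\xi=\frac1{pqn}\sum_v\sigma_T(v)f_v(T\cap\mathcal N(v))$. $f_v$ is $K_v$-Lipschitz ($K_v>0$) if $|f_v(A)-f_v(A')|\le K_v|A\triangle A'|/d(v)$ for all $A,A'\subseteq\mathcal N(v)$. Restricted randomization: for $\mathcal P=(S_1,\dots,S_n)$, $S_i=\{w_i^1,\dots,w_i^r\}$, $B_i$ i.i.d. uniform $p$-subsets of $\{1,\dots,r\}$, $T_{\vec B,\mathcal P}=\{w_i^j:j\in B_i\}$. *)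

From HB Require Import structures.
From mathcomp Require Import all_boot all_order all_algebra.
Set Implicit Arguments. Unset Strict Implicit. Unset Printing Implicit Defensive.
Import Order.TTheory GRing.Theory Num.Theory.
Local Open Scope ring_scope.

Section Defs.
Variables (R : realFieldType) (V : finType).

Definition nbhd (e : rel V) (v : V) : {set V} := [set u | e v u].
Definition deg (e : rel V) (v : V) : nat := #|nbhd e v|.

Definition simple_graph (e : rel V) : Prop :=
  (forall u v, e u v = e v u) /\ (forall v, ~~ e v v).
Definition no_isolated (e : rel V) : Prop := forall v, exists u, e v u.

Definition lipschitz (e : rel V) (fv : {set V} -> R) (Kv : R) (v : V) : Prop :=
  forall A A' : {set V}, A \subset nbhd e v -> A' \subset nbhd e v ->
    `|fv A - fv A'| <= Kv * (#|(A :\: A') :|: (A' :\: A)|%:R) / (deg e v)%:R.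

Definition sgn (p q : nat) (T : {set V}) (v : V) : R :=
  if v \in T then q%:R else - (p%:R).

Definition xi (e : rel V) (f : V -> {set V} -> R) (n p q : nat) (T : {set V}) : R :=
  ((p * q * n)%N%:R)^-1 * \sum_(v : V) sgn p q T v * f v (T :&: nbhd e v).

(* a partition P = (S_1..S_n), S_i = {w_i^1..w_i^r}, encoded as a bijection
   w : 'I_n * 'I_r -> V with w (i,j) = w_i^{j+1} *)
Definition partitions (n r : nat) : {set {ffun 'I_n * 'I_r -> V}} :=
  [set w : {ffun 'I_n * 'I_r -> V} | injectiveb w].

Definition Bvecs (n r p : nat) : {set {ffun 'I_n -> {set 'I_r}}} :=
  [set B : {ffun 'I_n -> {set 'I_r}} | [forall i, #|B i| == p]].

Definition Tset (n r : nat) (w : {ffun 'I_n * 'I_r -> V})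
  (B : {ffun 'I_n -> {set 'I_r}}) : {set V} :=
  [set v | [exists i : 'I_n, exists j : 'I_r, (j \in B i) && (w (i, j) == v)]].

Definition EB (e : rel V) (f : V -> {set V} -> R) (n p q : nat)
  (w : {ffun 'I_n * 'I_(p + q) -> V}) : R :=
  ((#|Bvecs n (p + q) p|)%:R)^-1 *
    \sum_(B in Bvecs n (p + q) p) xi e f n p q (Tset w B).

End Defs.

Arguments EB {R V} e f n p q w.
Arguments xi {R V} e f n p q T.
Arguments partitions V n r.
Arguments Bvecs n r p.
Arguments Tset {V n r} w B.

From mathcomp Require Import all_boot all_order all_algebra all_fingroup.
From mathcomp Require Import zify ring.
Set Implicit Arguments. Unset Strict Implicit. Unset Printing Implicit Defensive.
Import Order.TTheory GRing.Theory Num.Theory.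
Local Open Scope ring_scope.

(* Pairing each B with j0 in B_i0 with the q vectors
   obtained by swapping j0 for some u outside B_i0 cancels the weights q and
   -p of sigma_T at the vertex w(i0,j0), so |E_B(xi | w)| is bounded by the
   changes of f_w(i0,j0) under such swaps; by the Lipschitz condition such a
   change is at most K_x / d(x) if y = w(i0,u) is a neighbour of x = w(i0,j0),
   and 0 otherwise.  Averaging over a uniform bijection w, every ordered pair
   (x, y) of distinct vertices sits at two given distinct positions equally
   often, and the weights K_x / d(x) [x ~ y] add up to sum_x K_x. *)

Section SwapElement.
Variables (T : finType) (S : {set T}) (a b : T).
Hypotheses (aS : a \in S) (bS : b \notin S).

Lemma swap_notin : a \notin b |: (S :\ a).
Proof. by rewrite !inE eqxx /= orbF; apply: contraNneq bS => <-. Qed.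

Lemma card_swap : #|b |: (S :\ a)| = #|S|.
Proof. by rewrite cardsU1 !inE (negbTE bS) andbF [in RHS](cardsD1 a) aS. Qed.

Lemma swapK : a |: ((b |: (S :\ a)) :\ b) = S.
Proof. by rewrite setU1K ?setD1K // !inE (negbTE bS) andbF. Qed.

End SwapElement.

Section FfunUpdate.
Variables (I : finType) (T : Type).

Definition ffun_upd (g : {ffun I -> T}) i0 x : {ffun I -> T} :=
  [ffun i => if i == i0 then x else g i].

Lemma ffun_upd_same g i0 x : ffun_upd g i0 x i0 = x.
Proof. by rewrite ffunE eqxx. Qed.

Lemma ffun_upd_upd g i0 x y : ffun_upd (ffun_upd g i0 x) i0 y = ffun_upd g i0 y.
Proof. by apply/ffunP => i; rewrite !ffunE; case: (i == i0). Qed.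

Lemma ffun_upd_id g i0 : ffun_upd g i0 (g i0) = g.
Proof. by apply/ffunP => i; rewrite !ffunE; case: eqVneq => // ->. Qed.

End FfunUpdate.

Definition swapB n r (i0 : 'I_n) (j0 u : 'I_r) (B : {ffun 'I_n -> {set 'I_r}}) :=
  ffun_upd B i0 (u |: (B i0 :\ j0)).

Lemma Bvecs_upd n r p (B : {ffun 'I_n -> {set 'I_r}}) i0 (S : {set 'I_r}) :
  B \in Bvecs n r p -> #|S| = p -> ffun_upd B i0 S \in Bvecs n r p.
Proof.
rewrite !inE => /forallP cardB cardS; apply/forallP => i; rewrite ffunE.
by case: (i == i0); rewrite ?cardS ?cardB.
Qed.

Lemma card_Bvecs_row n r p (B : {ffun 'I_n -> {set 'I_r}}) i :
  B \in Bvecs n r p -> #|B i| = p.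
Proof. by rewrite inE => /forallP /(_ i) /eqP. Qed.

Lemma card_Bvecs_rowC n p q (B : {ffun 'I_n -> {set 'I_(p + q)}}) i :
  B \in Bvecs n (p + q) p -> #|~: B i| = q.
Proof.
move=> /(card_Bvecs_row i) cardB.
by have := cardsC (B i); rewrite cardB card_ord => /addnI.
Qed.

Section Switching.
Variables (n p q : nat) (i0 : 'I_n) (j0 : 'I_(p + q)).
Local Notation Bvec := {ffun 'I_n -> {set 'I_(p + q)}}.

Lemma sum_swapB (R : nmodType) (g : Bvec -> R) :
  \sum_(B in Bvecs n (p + q) p | j0 \notin B i0) \sum_(u in B i0) g B =
  \sum_(B in Bvecs n (p + q) p | j0 \in B i0) \sum_(u in ~: B i0) g (swapB i0 j0 u B).
Proof.
pose X x := (x.1 \in Bvecs n (p + q) p) && (j0 \in x.1 i0) && (x.2 \in ~: x.1 i0).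
pose Y y := (y.1 \in Bvecs n (p + q) p) && (j0 \notin y.1 i0) && (y.2 \in y.1 i0).
pose fwd (x : Bvec * 'I_(p + q)) := (swapB i0 j0 x.2 x.1, x.2).
pose bwd (y : Bvec * 'I_(p + q)) := (swapB i0 y.2 j0 y.1, y.2).
have fwdK x : X x -> Y (fwd x) /\ bwd (fwd x) = x.
  case: x => B u /andP [/andP [/= BB jB]]; rewrite inE => uB.
  have cardB := card_Bvecs_row i0 BB.
  rewrite /Y /bwd /swapB /= ffun_upd_same ffun_upd_upd swap_notin // swapK //.
  by rewrite ffun_upd_id setU11 Bvecs_upd // card_swap.
have bwdK y : Y y -> X (bwd y) /\ fwd (bwd y) = y.
  case: y => B u /andP [/andP [/= BB jB] uB].
  have cardB := card_Bvecs_row i0 BB.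
  rewrite /X /fwd /swapB /= ffun_upd_same ffun_upd_upd in_setC swap_notin // swapK //.
  by rewrite ffun_upd_id setU11 Bvecs_upd // card_swap.
rewrite !pair_big_dep /= (reindex_onto fwd bwd); last by move=> y /bwdK [].
apply: eq_bigl => x; apply/andP/idP => [[/bwdK [Xx _] /eqP <-] // | Xx].
by have [Yx ->] := fwdK _ Xx.
Qed.

Lemma switching_identity (R : pzRingType) (g : Bvec -> R) :
  \sum_(B in Bvecs n (p + q) p) (if j0 \in B i0 then q%:R else - p%:R) * g B =
  \sum_(B in Bvecs n (p + q) p | j0 \in B i0)
     \sum_(u in ~: B i0) (g B - g (swapB i0 j0 u B)).
Proof.
have pos : \sum_(B in Bvecs n (p + q) p | j0 \in B i0)
    (if j0 \in B i0 then q%:R else - p%:R) * g B =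
    \sum_(B in Bvecs n (p + q) p | j0 \in B i0) \sum_(u in ~: B i0) g B.
  apply: eq_bigr => B /andP [BB ->].
  by rewrite sumr_const (card_Bvecs_rowC i0 BB) mulr_natl.
have neg : \sum_(B in Bvecs n (p + q) p | j0 \notin B i0)
    (if j0 \in B i0 then q%:R else - p%:R) * g B =
    - \sum_(B in Bvecs n (p + q) p | j0 \in B i0) \sum_(u in ~: B i0) g (swapB i0 j0 u B).
  rewrite -sum_swapB -sumrN; apply: eq_bigr => B /andP [BB /negbTE ->].
  by rewrite sumr_const (card_Bvecs_row i0 BB) mulNr mulr_natl.
rewrite (bigID (fun B : Bvec => j0 \in B i0)) /= pos neg -sumrB.
by apply: eq_bigr => B _; rewrite sumrB.
Qed.

End Switching.

Section TreatmentSet.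
Variables (V : finType) (n r : nat) (w : {ffun 'I_n * 'I_r -> V}).
Implicit Types B : {ffun 'I_n -> {set 'I_r}}.

Lemma mem_Tset B i j : injective w -> (w (i, j) \in Tset w B) = (j \in B i).
Proof.
move=> w_inj; rewrite inE; apply/existsP/idP => [[i' /existsP [j' /andP [jB /eqP]]]|jB].
  by case/w_inj => <- <-.
by exists i; apply/existsP; exists j; rewrite jB eqxx.
Qed.

Lemma mem_TsetD B B' x : x \in Tset w B :\: Tset w B' ->
  exists i j, [/\ j \in B i, j \notin B' i & x = w (i, j)].
Proof.
rewrite !inE => /andP [xB' /existsP [i /existsP [j /andP [jB /eqP xE]]]].
exists i, j; split=> //; apply: contra xB' => jB'.
by apply/existsP; exists i; apply/existsP; exists j; rewrite jB' xE eqxx.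
Qed.

Lemma Tset_swapB_symdiff B i0 j0 u (B' := swapB i0 j0 u B) :
  (Tset w B :\: Tset w B') :|: (Tset w B' :\: Tset w B) \subset
    [set w (i0, j0); w (i0, u)].
Proof.
apply/subsetP => x; rewrite in_setU.
case/orP => /mem_TsetD [i [j []]]; rewrite /B' /swapB ffunE;
  case: eqVneq => [-> | _]; try by move=> ->.
- rewrite !inE => jB; rewrite jB andbT negb_or => /andP [_ /negPn /eqP -> ->].
  by rewrite eqxx.
- move=> + /negbTE jB'; rewrite !inE jB' andbF orbF => /eqP -> ->.
  by rewrite eqxx orbT.
Qed.

End TreatmentSet.

Section LipschitzWeight.
Variables (R : realFieldType) (V : finType) (e : rel V) (K : V -> R).

(* A bound on the change of f_x when the vertex y enters or leaves T. *)
Definition lip_weight x y : R := K x / (deg e x)%:R * (e x y)%:R.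

Lemma lip_weight_ge0 x y : 0 <= K x -> 0 <= lip_weight x y.
Proof. by move=> Kx; rewrite !mulr_ge0 ?invr_ge0 ?ler0n. Qed.

Lemma lip_weight_diag x : ~~ e x x -> lip_weight x x = 0.
Proof. by move/negbTE => exx; rewrite /lip_weight exx mulr0. Qed.

Lemma sum_lip_weight x : (exists u, e x u) -> \sum_y lip_weight x y = K x.
Proof.
case=> u exu; rewrite -mulr_sumr -natr_sum.
have -> : (\sum_y e x y = deg e x)%N.
  by rewrite /deg -sum1dep_card [RHS]big_mkcond; apply: eq_bigr => y _; case: (e x y).
by rewrite mulfVK // pnatr_eq0 -lt0n; apply/card_gt0P; exists u; rewrite inE.
Qed.

Lemma lipschitz_lip_weight (fv : {set V} -> R) v u (A A' : {set V}) :
  lipschitz e fv (K v) v -> 0 <= K v -> ~~ e v v ->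
  (A :\: A') :|: (A' :\: A) \subset [set v; u] ->
  `|fv (A :&: nbhd e v) - fv (A' :&: nbhd e v)| <= lip_weight v u.
Proof.
move=> lip Kv evv sub; apply: le_trans (lip _ _ (subsetIr _ _) (subsetIr _ _)) _.
rewrite /lip_weight mulrAC ler_wpM2l ?divr_ge0 ?ler0n // ler_nat.
have symdiff_sub : let A1 := A :&: nbhd e v in let A1' := A' :&: nbhd e v in
    (A1 :\: A1') :|: (A1' :\: A1) \subset if e v u then [set u] else set0.
  apply/subsetP => x Hx.
  have [evx xAA'] : e v x /\ x \in (A :\: A') :|: (A' :\: A).
    by move: Hx; rewrite !inE; case: (e v x); rewrite ?andbF ?andbT.
  move/(subsetP sub): xAA'; rewrite !inE => /orP [/eqP xv | /eqP xu].
    by move: evx; rewrite xv (negbTE evv).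
  by rewrite -xu evx inE.
apply: leq_trans (subset_leq_card symdiff_sub) _.
by case: (e v u); rewrite ?cards1 ?cards0.
Qed.

End LipschitzWeight.

Section RandomBijection.
Variables (R : nmodType) (T V : finType).
Local Notation injectives := [set w : {ffun T -> V} | injectiveb w].

Lemma perm_transitive_pairs (a b a' b' : T) : a != b -> a' != b' ->
  exists s : {perm T}, s a' = a /\ s b' = b.
Proof.
move=> ab ab'; set b2 := tperm a' a b'.
have b2a : b2 != a by rewrite /b2 -{2}(tpermL a' a) (inj_eq perm_inj) eq_sym.
exists (tperm a' a * tperm b2 b)%g; rewrite !permM tpermL; split.
  by rewrite tpermD // eq_sym.
by rewrite -/b2 tpermL.
Qed.

Lemma sum_injective_pair_eq (F : V -> V -> R) (a b a' b' : T) :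
  a != b -> a' != b' ->
  \sum_(w in injectives) F (w a) (w b) = \sum_(w in injectives) F (w a') (w b').
Proof.
move=> ab ab'; have [s [sa sb]] := perm_transitive_pairs ab ab'.
pose compose_s (w : {ffun T -> V}) := [ffun x => w (s x)].
have compose_s_inj : injective compose_s.
  move=> w1 w2 /ffunP E; apply/ffunP => x.
  by have := E ((s^-1)%g x); rewrite !ffunE permKV.
rewrite [RHS](reindex_inj compose_s_inj) /=.
apply: eq_big => w; last by move=> _; rewrite !ffunE sa sb.
rewrite !inE; apply/injectiveP/injectiveP => w_inj x y; rewrite ?ffunE.
  by move/w_inj/perm_inj.
move=> wxy; apply: (can_inj (permKV s)); apply: w_inj.
by rewrite !ffunE !permKV.
Qed.

Lemma sum_bijective_pairs (F : V -> V -> R) (w : T -> V) : bijective w ->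
  \sum_a \sum_b F (w a) (w b) = \sum_x \sum_y F x y.
Proof.
move=> w_bij; rewrite [RHS](reindex w) /=; last exact/onW_bij.
by apply: eq_bigr => a _; rewrite [RHS](reindex w) //; exact/onW_bij.
Qed.

Lemma sum_injective_offdiag (F : V -> V -> R) (a b : T) :
  #|T| = #|V| -> (forall x, F x x = 0) -> a != b ->
  (\sum_(w in injectives) F (w a) (w b)) *+ (#|T| * #|T|.-1) =
  (\sum_x \sum_y F x y) *+ #|injectives|.
Proof.
move=> cardTV Fxx ab.
transitivity (\sum_a' \sum_(b' | b' != a') \sum_(w in injectives) F (w a') (w b')).
  have row_sum a' : \sum_(b' | b' != a') \sum_(w in injectives) F (w a') (w b') =
      (\sum_(w in injectives) F (w a) (w b)) *+ #|T|.-1.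
    rewrite -(cardC1 a') -sumr_const.
    apply: eq_big => [b' | b' b'a]; first by rewrite !inE.
    by apply: sum_injective_pair_eq; rewrite // eq_sym.
  by under [RHS]eq_bigr do rewrite row_sum; rewrite sumr_const -mulrnA mulnC.
under eq_bigr do rewrite exchange_big; rewrite exchange_big -sumr_const /=.
apply: eq_bigr => w; rewrite inE => /injectiveP w_inj.
rewrite -(sum_bijective_pairs _ (inj_card_bij w_inj (eq_leq (esym cardTV)))).
by apply: eq_bigr => a' _; rewrite [in RHS](bigD1 a') //= Fxx add0r.
Qed.

End RandomBijection.

Section PartitionAverage.
Variables (R : realFieldType) (V : finType) (n p q : nat).
Variables (e : rel V) (f : V -> {set V} -> R) (K : V -> R).
Hypotheses (card_V : #|V| = ((p + q) * n)%N) (e_irrefl : forall v, ~~ e v v).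
Hypotheses (K_ge0 : forall v, 0 <= K v) (f_lip : forall v, lipschitz e (f v) (K v) v).

Local Notation r := (p + q)%N.
Local Notation Pos := ('I_n * 'I_r)%type.
Local Notation c := (lip_weight e K).

Lemma card_Pos : #|{: Pos}| = #|V|.
Proof. by rewrite card_prod !card_ord card_V mulnC. Qed.

Lemma norm_sum_sgn_le (w : {ffun Pos -> V}) i0 j0 : injective w ->
  `|\sum_(B in Bvecs n r p) sgn R p q (Tset w B) (w (i0, j0)) *
        f (w (i0, j0)) (Tset w B :&: nbhd e (w (i0, j0)))|
  <= \sum_(B in Bvecs n r p | j0 \in B i0) \sum_(u in ~: B i0) c (w (i0, j0)) (w (i0, u)).
Proof.
move=> w_inj.
have sgnE B : sgn R p q (Tset w B) (w (i0, j0)) = if j0 \in B i0 then q%:R else - p%:R.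
  by rewrite /sgn mem_Tset.
under eq_bigr do rewrite sgnE.
rewrite switching_identity; apply: le_trans (ler_norm_sum _ _ _) _.
apply: ler_sum => B _; apply: le_trans (ler_norm_sum _ _ _) _.
apply: ler_sum => u _; apply: lipschitz_lip_weight => //.
exact: Tset_swapB_symdiff.
Qed.

Definition switch_cost (w : {ffun Pos -> V}) : R :=
  \sum_(a : Pos) \sum_(B in Bvecs n r p | a.2 \in B a.1)
     \sum_(u in ~: B a.1) c (w a) (w (a.1, u)).

Lemma norm_EB_le (w : {ffun Pos -> V}) : injective w ->
  `|EB e f n p q w| <= (#|Bvecs n r p|%:R)^-1 * ((p * q * n)%N%:R)^-1 * switch_cost w.
Proof.
move=> w_inj; rewrite /EB /xi -mulr_sumr exchange_big /= !normrM !normfV !normr_nat.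
rewrite -mulrA ler_wpM2l ?ler_wpM2l ?invr_ge0 ?ler0n //.
rewrite (reindex w) /=; last exact/onW_bij/(inj_card_bij w_inj)/eq_leq/esym/card_Pos.
apply: le_trans (ler_norm_sum _ _ _) _.
by apply: ler_sum => -[i0 j0] _; apply: norm_sum_sgn_le.
Qed.

Definition pair_sum (a b : Pos) : R :=
  \sum_(w in partitions V n r) c (w a) (w b).

Lemma sum_switch_cost a0 b0 : a0 != b0 ->
  \sum_(w in partitions V n r) switch_cost w =
  pair_sum a0 b0 *+ (n * #|Bvecs n r p| * p * q).
Proof.
move=> a0b0.
transitivity (\sum_(a : Pos) \sum_(B in Bvecs n r p | a.2 \in B a.1)
     \sum_(u in ~: B a.1) pair_sum a0 b0).
  rewrite /switch_cost exchange_big; apply: eq_bigr => -[i j] _.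
  rewrite exchange_big; apply: eq_bigr => B /andP [_ jB].
  rewrite exchange_big; apply: eq_bigr => u; rewrite inE => uB.
  apply: sum_injective_pair_eq; rewrite // xpair_eqE eqxx /=.
  by apply: contraNneq uB => <-.
transitivity (\sum_(i : 'I_n) \sum_(j : 'I_r) \sum_(B in Bvecs n r p | j \in B i)
     pair_sum a0 b0 *+ q).
  rewrite pair_big; apply: eq_bigr => -[i j] _ /=.
  by apply: eq_bigr => B /andP [BB _]; rewrite sumr_const (card_Bvecs_rowC i BB).
transitivity (\sum_(i : 'I_n) \sum_(B in Bvecs n r p) pair_sum a0 b0 *+ q *+ p).
  apply: eq_bigr => i _; rewrite -(exchange_big_dep xpredT) //=.
  apply: eq_bigr => B BB.
  by rewrite (eq_bigl (mem (B i))) // sumr_const (card_Bvecs_row i BB).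
under eq_bigr do rewrite sumr_const.
by rewrite sumr_const card_ord -!mulrnA; congr (_ *+ _); lia.
Qed.

Lemma pair_sum_ge0 a b : 0 <= pair_sum a b.
Proof. by apply: sumr_ge0 => w _; apply: lip_weight_ge0. Qed.

Lemma sum_norm_EB_le a0 b0 : (0 < n)%N -> (0 < p)%N -> (0 < q)%N -> a0 != b0 ->
  \sum_(w in partitions V n r) `|EB e f n p q w| <= pair_sum a0 b0.
Proof.
move=> n_gt0 p_gt0 q_gt0 a0b0.
apply: le_trans (_ : \sum_(w in partitions V n r) (#|Bvecs n r p|%:R)^-1 *
    ((p * q * n)%N%:R)^-1 * switch_cost w <= _).
  by apply: ler_sum => w; rewrite inE => /injectiveP; apply: norm_EB_le.
rewrite -mulr_sumr (sum_switch_cost a0b0).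
have [-> | Bvecs_neq0] := eqVneq #|Bvecs n r p| 0%N.
  by rewrite invr0 !mul0r pair_sum_ge0.
rewrite le_eqVlt -mulr_natr !natrM; apply/predU1l; field.
by rewrite !pnatr_eq0 -!lt0n n_gt0 p_gt0 q_gt0 lt0n Bvecs_neq0.
Qed.

Lemma pair_sum_offdiag a0 b0 : no_isolated e -> a0 != b0 ->
  pair_sum a0 b0 *+ (r * n * (r * n).-1) = (\sum_v K v) *+ #|partitions V n r|.
Proof.
move=> no_iso a0b0.
have sum_c : \sum_x \sum_y c x y = \sum_x K x.
  by apply: eq_bigr => x _; apply: sum_lip_weight.
have c_diag x : c x x = 0 by apply: lip_weight_diag.
by rewrite -sum_c -(sum_injective_offdiag card_Pos c_diag a0b0) card_Pos card_V.
Qed.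

Lemma mean_pair_sum_le a0 b0 : no_isolated e -> a0 != b0 ->
  (#|partitions V n r|%:R)^-1 * pair_sum a0 b0 <=
  ((r * n)%N%:R)^-1 * (\sum_v K v) / ((r * n)%N - 1)%N%:R.
Proof.
move=> no_iso a0b0.
have rn_gt1 : (1 < r * n)%N.
  by rewrite -card_V -card_Pos; apply/card_gt1P; exists a0, b0.
have [-> | P_neq0] := eqVneq #|partitions V n r| 0%N.
  by rewrite invr0 mul0r divr_ge0 ?mulr_ge0 ?invr_ge0 ?ler0n ?sumr_ge0.
have -> : pair_sum a0 b0 =
    (\sum_v K v) *+ #|partitions V n r| / (r * n * (r * n).-1)%N%:R.
  rewrite -(pair_sum_offdiag no_iso a0b0) -(mulr_natr (pair_sum a0 b0)) mulfK //.
  by rewrite pnatr_eq0 -lt0n; nia.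
rewrite le_eqVlt -(mulr_natr (\sum_v K v)) subn1 natrM; apply/predU1l; field.
by rewrite -natrD !pnatr_eq0 P_neq0 andbT -!lt0n; apply/and3P; split; nia.
Qed.

End PartitionAverage.

Theorem mainTheorem12 (R : realFieldType) (V : finType) (n p q : nat)
  (e : rel V) (f : V -> {set V} -> R) (K : V -> R) :
  (0 < n)%N -> (0 < p)%N -> (0 < q)%N ->
  #|V| = ((p + q) * n)%N ->
  simple_graph e -> no_isolated e ->
  (forall v, f v set0 = 0) ->
  (forall v, 0 < K v) ->
  (forall v, lipschitz e (f v) (K v) v) ->
  let r := (p + q)%N in
  let Kbar := ((r * n)%N%:R)^-1 * \sum_(v : V) K v in
  ((#|partitions V n r|)%:R)^-1 *
    \sum_(w in partitions V n r) `|EB e f n p q w|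
  <= Kbar / ((r * n)%N - 1)%N%:R.
Proof.
move=> n_gt0 p_gt0 q_gt0 card_V [_ e_irrefl] no_iso _ K_gt0 f_lip; cbv zeta.
have K_ge0 v : 0 <= K v by apply: ltW.
have r_gt1 : (1 < p + q)%N by lia.
pose a0 : 'I_n * 'I_(p + q) := (Ordinal n_gt0, Ordinal (ltnW r_gt1)).
pose b0 : 'I_n * 'I_(p + q) := (Ordinal n_gt0, Ordinal r_gt1).
have a0b0 : a0 != b0 by rewrite xpair_eqE eqxx.
apply: le_trans (mean_pair_sum_le card_V e_irrefl K_ge0 no_iso a0b0).
rewrite ler_wpM2l ?invr_ge0 ?ler0n //.
exact: sum_norm_EB_le.
Qed.
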